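(* Let $k\in\mathbb N$, $P>0$, and let $F:\mathbb R\to\mathbb C$ be a $1$-periodic integrable function. Suppose that $w\in\mathbb N$ and $Q$ satisfy $1\le Q\le \tfrac12 (P/w)^{k/2}$. Then for every $q\in\mathbb N$ with $(q,w)=1$ one has \[ \int_{\mathfrak M_q(Q,P)}F(\alpha w^k)\,d\alpha = w^{-k}\int_{\mathfrak M_q(Q,P/w)}F(\beta)\,d\beta . \]
   Context: For real $X>0$, $Q\ge1$ and $q\in\mathbb N$ with $q\le Q$, and integers $a$ with $0\le a\le q$, $(a,q)=1$, put $\mathfrak M_{q,a}(Q,X)=\{\alpha\in[0,1):|q\alpha-a|\le QX^{-k}\}$, and let $\mathfrak M_q(Q,X)$ be the union of the sets $\mathfrak M_{q,a}(Q,X)$ over $0\le a\le q$ with $(a,q)=1$. By convention $\mathfrak M_q(Q,X)=\emptyset$ when $q>Q$. *)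

From HB Require Import structures.
From mathcomp Require Import all_boot all_order all_algebra.
From mathcomp Require Import all_classical all_reals all_analysis.
From mathcomp Require Import complex.
Set Implicit Arguments. Unset Strict Implicit. Unset Printing Implicit Defensive.
Import Order.TTheory GRing.Theory Num.Theory.
Local Open Scope classical_set_scope.
Local Open Scope ring_scope.

Definition Mqa {R : realType} (k q a : nat) (Q X : R) : set R :=
  [set alpha | 0 <= alpha < 1 /\ `|q%:R * alpha - a%:R| <= Q * X ^- k].

Definition Mq {R : realType} (k q : nat) (Q X : R) : set R :=
  if q%:R <= Q then
    \bigcup_(a in [set a : nat | (a <= q)%N /\ coprime a q]) Mqa k q a Q X
  else set0.

Definition cintegral {R : realType} (D : set R) (F : R -> R[i]) : R[i] :=
  (Rintegral (@lebesgue_measure R) D (fun x => complex.Re (F x)) +i*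
   Rintegral (@lebesgue_measure R) D (fun x => complex.Im (F x)))%C.

Definition cintegrable {R : realType} (D : set R) (F : R -> R[i]) : Prop :=
  (@lebesgue_measure R).-integrable D (fun x => (complex.Re (F x))%:E) /\
  (@lebesgue_measure R).-integrable D (fun x => (complex.Im (F x))%:E).

From HB Require Import structures.
From mathcomp Require Import all_boot all_order all_algebra.
From mathcomp Require Import all_classical all_reals all_analysis.
From mathcomp Require Import complex.
From mathcomp Require Import measurable_realfun.
From mathcomp Require Import ring lra zify.
Import Order.TTheory GRing.Theory Num.Theory.
Local Open Scope classical_set_scope.
Local Open Scope ring_scope.

(* Multiplication by c = w^k, followed by the integer shift n with a c = q n + b,
   maps the arc M_{q,a}(Q,P) affinely onto M_{q,b}(Q,P/w), and since (q, w) = 1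
   the map a |-> b permutes the residues coprime to q.  The bound
   Q <= (P/w)^{k/2} / 2 makes every arc radius at most 1/4, so the arcs are
   disjoint and the half arcs at 0 and 1 are matched with each other.  The
   affine change of variables on each arc contributes the factor w^-k, and the
   periodicity of F absorbs the shift n. *)

Section positive_scaling.
Context {R : realType}.
Local Open Scope ereal_scope.

Lemma gt0_muleBr (c : R) (x y : \bar R) : (0 < c)%R ->
  c%:E * (x - y) = c%:E * x - c%:E * y.
Proof.
move=> c0; have cy : c%:E * +oo = +oo by rewrite mulry gtr0_sg // mul1e.
have cNy : c%:E * -oo = -oo by rewrite mulrNy gtr0_sg // mul1e.
case: x => [x||]; case: y => [y||]; rewrite /= ?cy ?cNy //=.
by rewrite -EFinD -EFinM mulrBr.
Qed.

Lemma gt0_muleDr (c : R) (x y : \bar R) : (0 < c)%R ->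
  c%:E * (x + y) = c%:E * x + c%:E * y.
Proof.
by move=> c0; have := @gt0_muleBr c x (- y) c0; rewrite oppeK muleN oppeK.
Qed.

Lemma gt0_sume_distrr (I : Type) (s : seq I) (c : R) (F : I -> \bar R) :
  (0 < c)%R -> \sum_(i <- s) c%:E * F i = c%:E * \sum_(i <- s) F i.
Proof.
move=> c0; elim: s => [|i s IH]; first by rewrite !big_nil mule0.
by rewrite !big_cons IH gt0_muleDr.
Qed.

Lemma fine_EFinM (c : R) (x : \bar R) : fine (c%:E * x) = (c * fine x)%R.
Proof.
case: x => [x||] //=; rewrite mulr0; [rewrite mulry | rewrite mulrNy];
  by case: sgrP => _; rewrite ?mul0e ?mul1e ?mulN1e.
Qed.
End positive_scaling.

Section affine_change_of_variables.
Context {R : realType}.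
Local Notation mu := (@lebesgue_measure R).

Definition affine (c t : R) : measurableTypeR R -> measurableTypeR R :=
  fun x => c * x + t.

Lemma measurable_affine (c t : R) : measurable_fun setT (affine c t).
Proof. exact/measurable_funD/measurable_cst/measurable_funM. Qed.

Lemma preimage_affine_itv_oc (c t x y : R) : 0 < c ->
  affine c t @^-1` `]x, y]%classic = `](x - t) / c, (y - t) / c]%classic.
Proof.
move=> c0; apply/seteqP; split => z /=; rewrite !in_itv /= /affine
  ltr_pdivrMr // ler_pdivlMr // ![z * c]mulrC ltrBlDr lerBrDr //.
Qed.

Lemma lebesgue_measure_affine (c t : R) (A : set R) : 0 < c -> measurable A ->
  (pushforward mu (affine c t) A = (c^-1)%:E * mu A)%E.
Proof.
move=> c0 mA; have c0' : 0 <= c by exact: ltW.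
rewrite (@lebesgue_measure_unique R
  (mscale (NngNum c0') (pushforward mu (affine c t)))) //=;
  [exact: measurable_affine | move=> maff | move=> maff _ [[x y] _ <-]].
  by rewrite muleA -EFinM mulVf ?gt_eqF ?mul1e.
rewrite /mscale /= [pushforward _ _ _]/pushforward preimage_affine_itv_oc //.
rewrite !lebesgue_measure_itv /= !lte_fin ltr_pM2r ?invr_gt0 // ltrD2r.
case: ifP => _; last by rewrite mule0.
by rewrite -EFinM; congr (_%:E); field; rewrite gt_eqF.
Qed.

Lemma ge0_integral_affine (c t : R) (D : set R) (h : R -> \bar R) :
  0 < c -> measurable D -> measurable_fun setT h -> (forall y, 0 <= h y)%E ->
  (\int[mu]_(x in affine c t @^-1` D) h (affine c t x)
   = (c^-1)%:E * \int[mu]_(y in D) h y)%E.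
Proof.
move=> c0 mD mh h0; have c0' : 0 <= c^-1 by rewrite invr_ge0 ltW.
rewrite -[LHS](ge0_integral_pushforward (measurable_affine c t)) //;
  last exact: measurable_funTS.
rewrite (eq_measure_integral (mscale (NngNum c0') mu)) /=; last 2 first.
- exact: measurable_affine.
- by move=> maff A mA _; rewrite lebesgue_measure_affine.
by rewrite ge0_integral_mscale //; exact: measurable_funTS.
Qed.

Lemma integral_affine (c t : R) (D : set R) (g : R -> R) :
  0 < c -> measurable D -> measurable_fun setT g ->
  (\int[mu]_(x in affine c t @^-1` D) (g (affine c t x))%:E
   = (c^-1)%:E * \int[mu]_(y in D) (g y)%:E)%E.
Proof.
move=> c0 mD mg; have mG : measurable_fun setT (EFin \o g) by exact/measurable_EFinP.
rewrite integralE [in RHS]integralE.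
rewrite (_ : (fun x => (g (affine c t x))%:E) = (EFin \o g) \o affine c t) //.
rewrite funepos_comp funeneg_comp.
rewrite (@ge0_integral_affine c t D (funepos (EFin \o g))) //;
  last exact: measurable_funepos.
rewrite (@ge0_integral_affine c t D (funeneg (EFin \o g))) //;
  last exact: measurable_funeneg.
by rewrite [RHS]gt0_muleBr ?invr_gt0.
Qed.
End affine_change_of_variables.

Section periodic.
Context {R : realType} {f : R -> R}.
Hypothesis f_periodic : forall x, f (x + 1) = f x.

Lemma periodicDn (n : nat) x : f (x + n%:R) = f x.
Proof.
elim: n x => [|n IH] x; first by rewrite addr0.
by rewrite -natr1 addrA f_periodic IH.
Qed.

Lemma periodicBn (n : nat) x : f (x - n%:R) = f x.
Proof. by rewrite -[in RHS](subrK n%:R x) periodicDn. Qed.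

Lemma measurable_periodic :
  measurable_fun (`[0, 1]%classic : set R) f -> measurable_fun setT f.
Proof.
move=> mf.
have -> : [set: R] = \bigcup_n `[n%:R, n%:R + 1[%classic `|`
                     \bigcup_n `](- n%:R) - 1, - n%:R]%classic.
  apply/seteqP; split => // x _; case: (leP 0 x) => x0.
  - left; exists (Num.truncn x) => //=; rewrite in_itv /=.
    by have /andP[-> ?] := truncn_itv x0; rewrite natr1.
  - right; have Nx0 : 0 <= - x by rewrite oppr_ge0 ltW.
    have /andP[h1 h2] := truncn_itv Nx0.
    exists (Num.truncn (- x)) => //=; rewrite in_itv /=.
    rewrite -natr1 in h2; apply/andP; split; lra.
apply/measurable_funU; [exact: bigcup_measurable|exact: bigcup_measurable|split].
- apply/measurable_fun_bigcup => // n.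
  apply: (@eq_measurable_fun _ _ _ _ _ (f \o (fun x => x - n%:R))).
    by move=> x _; rewrite /= periodicBn.
  apply: (measurable_comp _ _ mf) => //; last exact: measurable_funB.
  move=> _ [x /= + <-]; rewrite !in_itv /= => /andP[h1 h2].
  apply/andP; split; lra.
- apply/measurable_fun_bigcup => // n.
  apply: (@eq_measurable_fun _ _ _ _ _ (f \o (fun x => x + n.+1%:R))).
    by move=> x _; rewrite /= periodicDn.
  apply: (measurable_comp _ _ mf) => //; last exact: measurable_funD.
  move=> _ [x /= + <-]; rewrite !in_itv /= -natr1 => /andP[h1 h2].
  apply/andP; split; lra.
Qed.
End periodic.

Section dilated_numerators.
Local Open Scope nat_scope.
Variables (q c : nat).
Hypotheses (q_gt0 : 0 < q) (c_gt0 : 0 < c) (coprime_cq : coprime c q).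

(* For a = q (possible only when q = 1) the arc sits at the right end of [0, 1),
   so it must go to b = q rather than to b = 0. *)
Definition arc_numer a := if a == q then q else (a * c) %% q.
Definition arc_shift a := if a == q then c.-1 else (a * c) %/ q.

Lemma arc_numer_shiftE a : q * arc_shift a + arc_numer a = a * c.
Proof.
rewrite /arc_numer /arc_shift; case: eqP => [->|_].
  by rewrite -[c in RHS](prednK c_gt0) mulnSr.
by rewrite mulnC -divn_eq.
Qed.

Lemma arc_numer_le a : arc_numer a <= q.
Proof. by rewrite /arc_numer; case: eqP => // _; exact/ltnW/ltn_pmod. Qed.

Lemma arc_numer_eq_q a : arc_numer a = q -> (arc_shift a).+1 = c.
Proof.
rewrite /arc_numer /arc_shift; case: eqP => [_ _|_ h]; first lia.
by have := ltn_pmod (a * c) q_gt0; rewrite h ltnn.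
Qed.

Lemma arc_numer_eq0 a : a <= q -> coprime a q -> arc_numer a = 0 -> arc_shift a = 0.
Proof.
rewrite /arc_numer /arc_shift; case: eqP => [_ _ _ h|aq aleq _ h]; first lia.
have : q %| a * c by rewrite /dvdn h.
rewrite Gauss_dvdl; last by rewrite coprime_sym.
case: a aq aleq {h} => [|a] aq aleq qa; first by rewrite mul0n div0n.
by have := dvdn_leq (ltn0Sn a) qa; lia.
Qed.

Lemma arc_shift_lt a : a <= q -> arc_shift a < c.
Proof.
rewrite /arc_shift; case: eqP => [_ _|aq aleq]; first by rewrite prednK.
by rewrite ltn_divLR // mulnC ltn_pmul2l //; lia.
Qed.

Lemma coprime_arc_numer a : coprime a q -> coprime (arc_numer a) q.
Proof.
rewrite /arc_numer; case: eqP => [<- //|_ h].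
by rewrite coprime_modl coprimeMl h coprime_cq.
Qed.

Lemma arc_numer_inj : {in [pred a | a <= q] &, injective arc_numer}.
Proof.
have mod_inj b1 b2 : b1 <= b2 < q -> (b1 * c) %% q = (b2 * c) %% q -> b1 = b2.
  move=> /andP[le12 lt2] h.
  have : q %| (b2 - b1) * c.
    by rewrite mulnBl -eqn_mod_dvd ?leq_mul2r ?le12 ?orbT // h.
  rewrite Gauss_dvdl; last by rewrite coprime_sym.
  case E : (b2 - b1) => [|m]; first lia.
  by move=> /(dvdn_leq (ltn0Sn m)); lia.
move=> a1 a2; rewrite !inE /arc_numer => a1q a2q.
case: eqP => [->|/eqP n1]; case: eqP => [->|/eqP n2] // h.
- by have := ltn_pmod (a2 * c) q_gt0; rewrite -h ltnn.
- by have := ltn_pmod (a1 * c) q_gt0; rewrite h ltnn.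
case: (leqP a1 a2) => l.
- by apply: mod_inj => //; lia.
- by apply/esym/mod_inj => //; lia.
Qed.

Definition coprime_residues := [seq a <- iota 0 q.+1 | coprime a q].

Lemma mem_coprime_residues a : (a \in coprime_residues) = (a <= q) && coprime a q.
Proof. by rewrite mem_filter mem_iota add0n ltnS andbC. Qed.

Lemma perm_arc_numer : perm_eq (map arc_numer coprime_residues) coprime_residues.
Proof.
have us : uniq coprime_residues by rewrite filter_uniq // iota_uniq.
have inj : {in coprime_residues &, injective arc_numer}.
  move=> a1 a2; rewrite !mem_coprime_residues => /andP[h1 _] /andP[h2 _].
  exact: arc_numer_inj.
have um : uniq (map arc_numer coprime_residues) by rewrite map_inj_in_uniq.
have sub : {subset map arc_numer coprime_residues <= coprime_residues}.
  move=> x /mapP[a]; rewrite !mem_coprime_residues => /andP[_ h] ->.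
  by rewrite arc_numer_le coprime_arc_numer.
have [_ eqm] := uniq_min_size um sub (eq_leq (esym (size_map _ _))).
exact: uniq_perm.
Qed.
End dilated_numerators.

Section major_arcs.
Context {R : realType}.

Lemma arc_radius_le (k : nat) (Q X : R) : 0 < X -> 1 <= Q ->
  Q <= 2^-1 * powR X (k%:R / 2) -> Q * X ^- k * 4 <= 1.
Proof.
move=> X0 Q1 hQ; set s := powR X (k%:R / 2).
have s2 : s ^+ 2 = X ^+ k.
  rewrite -powR_mulrn ?powR_ge0 // -powRrM -powR_mulrn ?ltW //.
  by congr (powR _ _); rewrite -mulrA mulVf // mulr1.
have Xk : 0 < X ^+ k by rewrite exprn_gt0.
rewrite -mulrA mulrC -mulrA ler_pdivrMl // mulr1 -s2.
have s_ge2Q : 2 * Q <= s by rewrite -ler_pdivlMl // mulrC.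
have s0 : 0 <= s by exact: powR_ge0.
nra.
Qed.

Lemma measurable_Mqa k (q a : nat) (Q X : R) :
  (0 < q)%N -> measurable (Mqa k q a Q X).
Proof.
move=> q0; have qR : 0 < q%:R :> R by rewrite ltr0n.
rewrite /Mqa; move: (Q * X ^- k) => r.
have -> : [set alpha | 0 <= alpha < 1 /\ `|q%:R * alpha - a%:R| <= r] =
   `[0, 1[%classic `&` `[(a%:R - r) / q%:R, (a%:R + r) / q%:R]%classic.
  apply/seteqP; split => x;
    rewrite /= !in_itv /= ler_norml ler_pdivrMr // ler_pdivlMr //.
  - by move=> [-> /andP[h1 h2]]; split => //; apply/andP; split; lra.
  - by move=> [-> /andP[h1 h2]]; split => //; apply/andP; split; lra.
by apply: measurableI; exact: measurable_itv.
Qed.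

Lemma trivIset_Mqa k (q : nat) (Q X : R) (I : set nat) : Q * X ^- k * 2 < 1 ->
  trivIset I (fun a => Mqa k q a Q X).
Proof.
rewrite /Mqa; move: (Q * X ^- k) => r r2 i j _ _ [x /= [[_ hi] [_ hj]]].
move: hi hj; rewrite !ler_norml => /andP[a1 a2] /andP[b1 b2].
have sep (m n : nat) : (m < n)%N -> m%:R + 1 <= n%:R :> R.
  by move=> mn; rewrite natr1 ler_nat.
by case: (ltngtP i j) => // /sep ij; exfalso; lra.
Qed.

Lemma unit_itv_dilated_arc (q b n c : nat) (y r : R) :
  (0 < q)%N -> r * 4 <= 1 ->
  `|q%:R * y - b%:R| <= r -> (b <= q)%N -> (b = q -> n.+1 = c) ->
  (b = 0 -> n = 0)%N -> (n < c)%N ->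
  (0 <= y < 1) = (- n%:R <= y < c%:R - n%:R).
Proof.
move=> q0 r4 hy bq hbq hb0 nc.
have qR : 0 < q%:R :> R by rewrite ltr0n.
move: (hy); rewrite ler_norml => /andP[h1 h2].
have ncR : n%:R + 1 <= c%:R :> R by rewrite natr1 ler_nat.
have bqR : b%:R <= q%:R :> R by rewrite ler_nat.
apply/idP/idP => /andP[y0 y1]; apply/andP; split.
- have : 0 <= n%:R :> R by [].
  lra.
- lra.
- case: n hb0 hbq nc ncR y0 y1 => [|n] hb0 hbq nc ncR y0 y1; first lra.
  case: b hb0 hbq bq bqR h1 h2 hy => [|b] hb0 hbq bq bqR h1 h2 hy.
    by have := hb0 erefl.
  have : 1 <= b.+1%:R :> R by rewrite ler1n.
  nra.
- case: (eqVneq b q) => [e|ne].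
  + by rewrite -(hbq e) -natr1 in y1; lra.
  + have : b%:R + 1 <= q%:R :> R by rewrite natr1 ler_nat ltn_neqAle ne.
    nra.
Qed.

Lemma Mqa_dilate k (q w a : nat) (Q P : R) :
  (0 < q)%N -> (0 < w)%N -> coprime q w -> 0 < P -> 0 <= Q ->
  Q * (P / w%:R) ^- k * 4 <= 1 -> (a <= q)%N -> coprime a q ->
  Mqa k q a Q P = affine (w%:R ^+ k) (- (arc_shift q (w ^ k) a)%:R) @^-1`
                  Mqa k q (arc_numer q (w ^ k) a) Q (P / w%:R).
Proof.
move=> q0 w0 qw P0 Q0 r4 aq cop.
set c := (w ^ k)%N; set b := arc_numer q c a; set n := arc_shift q c a.
have c0 : (0 < c)%N by rewrite expn_gt0 w0.
have cq : coprime c q by rewrite coprimeXl // coprime_sym.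
have cR : w%:R ^+ k = c%:R :> R by rewrite natrX.
have c0R : 0 < c%:R :> R by rewrite ltr0n.
have radiusE : Q * (P / w%:R) ^- k = c%:R * (Q * P ^- k).
  by rewrite -cR expr_div_n invfM invrK; ring.
have shiftE x : q%:R * (c%:R * x - n%:R) - b%:R = c%:R * (q%:R * x - a%:R) :> R.
  have eqR : q%:R * n%:R + b%:R = a%:R * c%:R :> R.
    by rewrite -!natrM -natrD arc_numer_shiftE.
  by rewrite -[b%:R](addKr (q%:R * n%:R)) eqR; ring.
have dist x : `|q%:R * (c%:R * x - n%:R) - b%:R| <= Q * (P / w%:R) ^- k
              = (`|q%:R * x - a%:R| <= Q * P ^- k).
  by rewrite shiftE normrM gtr0_norm // radiusE ler_pM2l.
have range x : `|q%:R * x - a%:R| <= Q * P ^- k ->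
    (0 <= c%:R * x - n%:R < 1) = (0 <= x < 1).
  move=> hx; rewrite (@unit_itv_dilated_arc q b n c _ (Q * (P / w%:R) ^- k)) //;
    [| by rewrite dist | exact: arc_numer_le | exact: arc_numer_eq_q
     | exact: arc_numer_eq0 | exact: arc_shift_lt].
  by apply/idP/idP => /andP[h1 h2]; apply/andP; split; nra.
rewrite /Mqa /affine cR; apply/seteqP; split => x /=.
- by move=> [x01 hx]; rewrite dist range.
- by move=> [y01]; rewrite dist => hx; rewrite -range.
Qed.
End major_arcs.

Section integral_major_arcs.
Context {R : realType}.
Local Notation mu := (@lebesgue_measure R).

Lemma Mq_bigsetU k (q : nat) (Q X : R) : q%:R <= Q ->
  Mq k q Q X = \big[setU/set0]_(a <- coprime_residues q) Mqa k q a Q X.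
Proof.
move=> qQ; rewrite /Mq qQ -bigcup_seq; congr bigcup.
apply/seteqP; split => a /=; rewrite mem_coprime_residues.
  by move=> [-> ->].
by move=> /andP[].
Qed.

Lemma Mq_set0 k (q : nat) (Q X : R) : ~~ (q%:R <= Q) -> Mq k q Q X = set0.
Proof. by move=> qQ; rewrite /Mq ifN. Qed.

Lemma integral_Mq k (q : nat) (Q X : R) (g : R -> R) :
  (0 < q)%N -> q%:R <= Q -> Q * X ^- k * 2 < 1 -> measurable_fun setT g ->
  (\int[mu]_(x in Mq k q Q X) (g x)%:E
   = \sum_(a <- coprime_residues q) \int[mu]_(x in Mqa k q a Q X) (g x)%:E)%E.
Proof.
move=> q0 qQ r2 mg; rewrite Mq_bigsetU //.
apply: integral_bigsetU_EFin; [|exact: filter_uniq (iota_uniq _ _)|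
  exact: trivIset_Mqa| exact/measurable_funTS/measurable_EFinP].
by move=> a; exact: measurable_Mqa.
Qed.

Lemma integral_Mqa_dilate k (q w a : nat) (Q P : R) (f : R -> R) :
  (0 < q)%N -> (0 < w)%N -> coprime q w -> 0 < P -> 0 <= Q ->
  Q * (P / w%:R) ^- k * 4 <= 1 -> (a <= q)%N -> coprime a q ->
  (forall x, f (x + 1) = f x) -> measurable_fun setT f ->
  (\int[mu]_(x in Mqa k q a Q P) (f (x * w%:R ^+ k))%:E
   = ((w%:R ^+ k)^-1)%:E *
     \int[mu]_(y in Mqa k q (arc_numer q (w ^ k) a) Q (P / w%:R)) (f y)%:E)%E.
Proof.
move=> q0 w0 qw P0 Q0 r4 aq cop f1 mf.
set n := arc_shift q (w ^ k) a; set c := w%:R ^+ k.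
have c0 : 0 < c by rewrite exprn_gt0 // ltr0n.
rewrite (Mqa_dilate k q w a Q P q0 w0 qw P0 Q0 r4 aq cop) -/n -/c.
transitivity (\int[mu]_(x in affine c (- n%:R) @^-1`
                  Mqa k q (arc_numer q (w ^ k) a) Q (P / w%:R))
   ((fun y => f (y + n%:R)) (affine c (- n%:R) x))%:E)%E.
  by apply: eq_integral => x _; rewrite /affine subrK mulrC.
rewrite (@integral_affine _ c (- n%:R) _ (fun y => f (y + n%:R))) //.
- by congr (_ * _)%E; apply: eq_integral => y _; rewrite periodicDn.
- exact: measurable_Mqa.
- exact/measurableT_comp/measurable_funD.
Qed.
End integral_major_arcs.

Lemma Rintegral_Mq_dilate {R : realType} k (q w : nat) (Q P : R) (f : R -> R) :
  (0 < q)%N -> (0 < w)%N -> coprime q w -> 0 < P ->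
  1 <= Q -> Q <= 2^-1 * powR (P / w%:R) (k%:R / 2) ->
  (forall x, f (x + 1) = f x) -> measurable_fun (`[0, 1]%classic : set R) f ->
  \int[lebesgue_measure]_(x in Mq k q Q P) f (x * w%:R ^+ k)
  = (w%:R ^+ k)^-1 * \int[lebesgue_measure]_(y in Mq k q Q (P / w%:R)) f y.
Proof.
move=> q0 w0 qw P0 Q1 hQ f1 mf01.
have mf := measurable_periodic f1 mf01.
have w0R : 0 < w%:R :> R by rewrite ltr0n.
have Pw0 : 0 < P / w%:R by exact: divr_gt0.
have r4 : Q * (P / w%:R) ^- k * 4 <= 1 by exact: arc_radius_le Pw0 Q1 hQ.
have hQP : Q <= 2^-1 * powR P (k%:R / 2).
  apply: (le_trans hQ); rewrite ler_pM2l ?invr_gt0 //.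
  apply: ge0_ler_powR; rewrite ?nnegrE ?divr_ge0 //; try exact: ltW.
  by rewrite ler_pdivrMr //; apply: ler_peMr; [exact: ltW | rewrite ler1n].
have r4P : Q * P ^- k * 4 <= 1 by exact: arc_radius_le P0 Q1 hQP.
have mfw : measurable_fun setT (fun x : R => f (x * w%:R ^+ k)).
  by apply: measurableT_comp mf _; exact: measurable_funM.
have c0 : (0 < w ^ k)%N by rewrite expn_gt0 w0.
have cq : coprime (w ^ k) q by rewrite coprimeXl // coprime_sym.
have [qQ|qQ] := boolP (q%:R <= Q); last first.
  by rewrite !Mq_set0 // !Rintegral_set0 mulr0.
rewrite /Rintegral !integral_Mq //; try lra.
rewrite -fine_EFinM -gt0_sume_distrr ?invr_gt0 ?exprn_gt0 //.
rewrite -[in RHS](perm_big _ (perm_arc_numer _ _ q0 c0 cq)) big_map.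
congr fine; apply: eq_big_seq => a; rewrite mem_coprime_residues => /andP[aq cop].
by apply: integral_Mqa_dilate => //; exact: le_trans Q1.
Qed.

Theorem lemma2p3 (R : realType) (k : nat) (P : R) (F : R -> R[i])
  (hP : 0 < P)
  (hper : forall x : R, F (x + 1) = F x)
  (hint : cintegrable `[0, 1]%classic F)
  (w : nat) (hw : (0 < w)%N) (Q : R)
  (hQ1 : 1 <= Q) (hQ2 : Q <= 2^-1 * powR (P / w%:R) (k%:R / 2))
  (q : nat) (hq : (0 < q)%N) (hqw : coprime q w) :
  cintegral (Mq k q Q P) (fun alpha => F (alpha * w%:R ^+ k))
  = (((w%:R ^+ k)^-1)%:C)%C * cintegral (Mq k q Q (P / w%:R)) F.
Proof.
have [intRe intIm] := hint.
have dilate (f : R[i] -> R) : measurable_fun (`[0, 1]%classic : set R) (f \o F) ->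
    \int[lebesgue_measure]_(x in Mq k q Q P) f (F (x * w%:R ^+ k))
    = (w%:R ^+ k)^-1 * \int[lebesgue_measure]_(y in Mq k q Q (P / w%:R)) f (F y).
  by apply: Rintegral_Mq_dilate => // x; rewrite /= hper.
rewrite /cintegral !dilate; last 2 first.
- by apply/measurable_EFinP; exact: measurable_int intIm.
- by apply/measurable_EFinP; exact: measurable_int intRe.
by apply/eqP; rewrite eq_complex /= !mul0r subr0 addr0 !eqxx.
Qed.
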